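(* Let $\beta>0$ and let $V\in\mathbb R^{d\times d}$ be real symmetric with orthonormal eigenbasis $(e_k)_{k=1}^d$ and eigenvalues $(\lambda_k)$ satisfying $\lambda_1>\max_{k\ge2}|\lambda_k|$. Let $x_i(t)\in\mathbb S^{d-1}$, $i\in[n]$, solve \[ \dot x_i=P^\perp_{x_i}\Big(\frac1{Z_i}\sum_{j=1}^n e^{\beta\langle x_i,Vx_j\rangle}Vx_j\Big),\qquad Z_i=\sum_{k=1}^n e^{\beta\langle x_i,Vx_k\rangle}, \] and write $c_{i,k}(t)=\langle x_i(t),e_k\rangle$. Suppose there is $\delta>0$ with $c_{i,1}(0)\ge\delta$ for all $i\in[n]$. Then: (1) The cone $\mathcal C_\delta:=\{(x_i)_{i=1}^n\in(\mathbb S^{d-1})^n: c_{i,1}\ge\delta\ \forall i\in[n]\}$ is forward invariant. (2) For every $k\neq1$, setting $r_{i,k}(t)=c_{i,k}(t)/c_{i,1}(t)$ and $R_k(t)=\max_{1\le i\le n}|r_{i,k}(t)|$, one has $R_k(t)\le R_k(0)e^{-\delta(\lambda_1-|\lambda_k|)t}$ for all $t\ge0$. (3) For every $i\in[n]$, $x_i(t)\to e_1$ as $t\to\infty$.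
   Context: $P^\perp_xy=y-\langle x,y\rangle x$ denotes the orthogonal projection onto $T_x\mathbb S^{d-1}$. *)

From HB Require Import structures.
From mathcomp Require Import all_boot all_order all_algebra.
From mathcomp Require Import all_classical all_reals all_analysis.
Set Implicit Arguments. Unset Strict Implicit. Unset Printing Implicit Defensive.
Import Order.TTheory GRing.Theory Num.Theory.
Import numFieldNormedType.Exports.
Local Open Scope ring_scope.

Definition dotv {R : realType} {d : nat} (u v : 'cV[R]_d) : R :=
  \sum_(j < d) u j 0 * v j 0.

Definition Pperp {R : realType} {d : nat} (x y : 'cV[R]_d) : 'cV[R]_d :=
  y - dotv x y *: x.

Definition Zpart {R : realType} {d n : nat} (beta : R) (V : 'M[R]_d)
  (X : 'I_n -> 'cV[R]_d) (i : 'I_n) : R :=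
  \sum_(k < n) expR (beta * dotv (X i) (V *m X k)).

Definition attn_field {R : realType} {d n : nat} (beta : R) (V : 'M[R]_d)
  (X : 'I_n -> 'cV[R]_d) (i : 'I_n) : 'cV[R]_d :=
  Pperp (X i) ((Zpart beta V X i)^-1 *:
     \sum_(j < n) (expR (beta * dotv (X i) (V *m X j)) *: (V *m X j))).

From HB Require Import structures.
From mathcomp Require Import all_boot all_order all_algebra.
From mathcomp Require Import all_classical all_reals all_analysis.
From mathcomp Require Import ring lra.
Import Order.TTheory GRing.Theory Num.Theory.
Import numFieldNormedType.Exports.
Local Open Scope classical_set_scope.
Local Open Scope ring_scope.

(* Everything rests on a first-touching principle ([barrier_positive]): finitely
   many functions that start positive stay positive if each has a positive
   derivative whenever it vanishes while the others are nonnegative.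
   Write c_ik = <x_i, e_k> (index 1 of the paper is [ord0]). The first
   coordinate evolves by c_i1' = sum_j W_ij (lambda_1 c_j1 - c_i1 <x_i, V x_j>),
   and the spectral gap makes every summand nonnegative for the particle with
   the smallest c_i1; comparison with a slowly decreasing barrier gives the
   invariance of the cone. For k <> 1 the energy terms cancel in the derivative
   of r_ik = c_ik / c_i1, and at a particle where +-r_ik reaches the maximum M of
   the |r_jk| one gets +-r_ik' <= -delta (lambda_1 - |lambda_k|) M; comparison
   with R_k(0) exp(-delta (lambda_1 - |lambda_k|) t) + eps gives the decay.
   Finally c_i1^2 (1 + sum_k r_ik^2) = 1 forces c_i1 -> 1, hence x_i -> e_1. *)

Section Barrier.
Context {R : realType}.

Lemma is_derive_continuous {f : R -> R} {t df : R} :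
  is_derive t 1 f df -> {for t, continuous f}.
Proof. by move=> [/derivable1_diffP/differentiable_continuous]. Qed.

Lemma is_derive_gt0_near_left {f : R -> R} {t df : R} :
  is_derive t 1 f df -> 0 < df -> \forall u \near t^'-, f u < f t.
Proof.
move=> [fd <-] df0.
have : \forall h \near 0^', 0 < h^-1 *: ((f \o shift t) (h *: 1) - f t).
  exact: cvgr_gt fd _ df0.
rewrite nbhs_left0P near_withinE => /nbhs_ballP[e e0 He].
near=> h.
have h0 : 0 < h by near: h; exact: nbhs_right_gt.
have /He : ball 0 e (- h).
  by rewrite /ball /= sub0r opprK gtr0_norm //; near: h; exact: nbhs_right_lt.
rewrite oppr_eq0 gt_eqF // => /(_ isT).
rewrite /= /shift [_%:A]mulr1 -[_ *: _]/(_ * _) invrN mulNr oppr_gt0 pmulr_rlt0 ?invr_gt0 //.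
by rewrite subr_lt0 addrC.
Unshelve. all: by end_near. Qed.

Lemma first_nonpositive_time {I : finType} {g : I -> R -> R} {a t0 : R} {i0 : I} :
  a <= t0 -> g i0 t0 <= 0 ->
  exists tm, [/\ a <= tm, tm <= t0,
    forall u, a <= u -> u < tm -> forall j, 0 < g j u &
    (forall j, 0 < g j tm) -> ~ \forall u \near tm^'+, forall j, 0 < g j u].
Proof.
move=> at0 g0.
pose A := [set u | a <= u <= t0 /\ exists i, g i u <= 0].
have At0 : A t0 by split; [rewrite at0 lexx | exists i0].
have hlA : has_lbound A by exists a => u [/andP[]].
have hiA : has_inf A by split; [exists t0 | ].
have tmt0 : inf A <= t0 by exact: ge_inf.
exists (inf A); split => //.
- by apply: lb_le_inf; [exists t0 | move=> u [/andP[]]].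
- move=> u au utm j; rewrite ltNge; apply/negP => gju.
  suff : inf A <= u by rewrite leNgt utm.
  apply: ge_inf => //.
  by split; [rewrite au (ltW (lt_le_trans utm tmt0)) | exists j].
move=> gtm; rewrite near_withinE => /nbhs_ballP[e e0 He].
have [u Au ue] := inf_adherent e0 hiA.
have [_ [j gju]] := Au.
have : inf A <= u by exact: ge_inf.
rewrite le_eqVlt => /predU1P[tmu|tmu]; first by move: gju; rewrite -tmu leNgt gtm.
suff : 0 < g j u by rewrite ltNge gju.
apply: (He u _ tmu j); rewrite /ball /= ltr0_norm ?subr_lt0 //; lra.
Qed.

Lemma barrier_positive (I : finType) (g g' : I -> R -> R) (a T : R) :
  (forall i, g i t @[t --> a^'+] --> g i a) ->
  (forall i t, a < t -> t <= T -> is_derive t 1 (g i) (g' i t)) ->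
  (forall i, 0 < g i a) ->
  (forall i t, a < t -> t <= T -> (forall j, 0 <= g j t) -> g i t = 0 ->
     0 < g' i t) ->
  forall i t, a <= t -> t <= T -> 0 < g i t.
Proof.
move=> g_right g_deriv g_a g_cross i0 t0 at0 t0T; rewrite ltNge; apply/negP => g0.
have [tm [atm tmt0 pos_before not_pos_right]] := first_nonpositive_time at0 g0.
have atm' : a < tm.
  rewrite lt_neqAle atm andbT; apply/negP => /eqP atm'.
  apply: not_pos_right; rewrite -atm' //.
  by apply: filter_forall => j; exact: cvgr_gt _ (g_right j) _ (g_a j).
have tmT : tm <= T by exact: le_trans t0T.
have g_cont j : {for tm, continuous (g j)}.
  exact: is_derive_continuous (g_deriv j tm atm' tmT).
have left_pos j : \forall u \near tm^'-, 0 < g j u.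
  near=> u; apply: pos_before.
  - by near: u; exact: nbhs_left_ge.
  - by near: u; exact: nbhs_left_lt.
have nonneg j : 0 <= g j tm.
  apply: (cvgr_to_ge (cvg_at_left_filter (g_cont j))).
  by apply: filterS (left_pos j) => u /ltW.
have [i gi] : exists i, g i tm <= 0.
  apply/existsP/contraT => /existsPn gtm.
  have gtm' j : 0 < g j tm by rewrite ltNge gtm.
  exfalso; apply: (not_pos_right gtm'); apply: filter_forall => j.
  exact: cvgr_gt _ (cvg_at_right_filter (g_cont j)) _ (gtm' j).
have gi0 : g i tm = 0 by apply/le_anti; rewrite gi nonneg.
have neg_left : \forall u \near tm^'-, g i u < 0.
  rewrite -gi0; apply: is_derive_gt0_near_left (g_deriv i tm atm' tmT) _.
  exact: g_cross i tm atm' tmT nonneg gi0.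
have [u [gu_neg gu_pos]] :=
  @filter_ex _ _ (at_left_proper_filter tm) _ (filterI neg_left (left_pos i)).
by move: gu_neg; rewrite ltNge ltW.
Unshelve. all: by end_near. Qed.
End Barrier.

Lemma cvg_sum {K : numFieldType} {V : normedModType K} {T I : Type}
  {F : set_system T} {FF : Filter F} {r : seq I} {P : pred I}
  {f : I -> T -> V} {l : I -> V} :
  (forall i, P i -> f i t @[t --> F] --> l i) ->
  \sum_(i <- r | P i) f i t @[t --> F] --> \sum_(i <- r | P i) l i.
Proof. by apply: (cvg_big (op := +%R)) => //; exact: add_continuous. Qed.

Section InnerProduct.
Context {R : realType} {d : nat}.
Implicit Types u v w : 'cV[R]_d.

Lemma dotvC u v : dotv u v = dotv v u.
Proof. by apply: eq_bigr => j _; rewrite mulrC. Qed.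

Lemma dotvDl u w v : dotv (u + w) v = dotv u v + dotv w v.
Proof. by rewrite /dotv -big_split; apply: eq_bigr => j _; rewrite mxE mulrDl. Qed.

Lemma dotvZl a u v : dotv (a *: u) v = a * dotv u v.
Proof. by rewrite /dotv mulr_sumr; apply: eq_bigr => j _; rewrite mxE mulrA. Qed.

Lemma dotvBl u w v : dotv (u - w) v = dotv u v - dotv w v.
Proof. by rewrite -scaleN1r dotvDl dotvZl mulN1r. Qed.

Lemma dotv_suml m (F : 'I_m -> 'cV[R]_d) v :
  dotv (\sum_(i < m) F i) v = \sum_(i < m) dotv (F i) v.
Proof.
rewrite /dotv exchange_big /=; apply: eq_bigr => j _.
by rewrite summxE mulr_suml.
Qed.

Lemma continuous_dotvl w : continuous (fun u => dotv u w).
Proof.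
apply: (continuous_big (op := +%R)) => [|j _ u]; first exact: add_continuous.
apply: (@continuous_comp _ _ _ (fun M : 'cV[R]_d => M j 0) ( *%R^~ (w j 0))).
  exact: coord_continuous.
exact: mulrr_continuous.
Qed.

Definition orthonormal (e : 'I_d -> 'cV[R]_d) :=
  forall k l, dotv (e k) (e l) = (k == l)%:R.

Context {e : 'I_d -> 'cV[R]_d}.
Hypothesis e_orthonormal : orthonormal e.

Lemma orthonormal_expansion u : u = \sum_(k < d) dotv u (e k) *: e k.
Proof.
pose E := \matrix_(i, k) e k i 0 : 'M[R]_d.
have /mulmx1C EEt : E^T *m E = 1%:M.
  apply/matrixP => k l; rewrite !mxE -(e_orthonormal k l) /dotv.
  by apply: eq_bigr => j _; rewrite !mxE.
rewrite {1}(_ : u = E *m (E^T *m u)); last by rewrite mulmxA EEt mul1mx.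
apply/matrixP => j z; rewrite (ord1 z) !mxE summxE.
apply: eq_bigr => k _; rewrite !mxE mulrC; congr (_ * _).
rewrite /dotv; apply: eq_bigr => i _; rewrite !mxE mulrC.
by congr (u _ _ * e _ _ _); apply/val_inj.
Qed.

Lemma dotv_parseval u v : dotv u v = \sum_(k < d) dotv u (e k) * dotv v (e k).
Proof.
rewrite {1}(orthonormal_expansion u) dotv_suml.
by apply: eq_bigr => k _; rewrite dotvZl [dotv (e k) v]dotvC.
Qed.

Context {V : 'M[R]_d} {lam : 'I_d -> R}.
Hypothesis e_eigen : forall k, V *m e k = lam k *: e k.

Lemma dotv_eigen u k : dotv (V *m u) (e k) = lam k * dotv u (e k).
Proof.
rewrite {1}(orthonormal_expansion u) mulmx_sumr dotv_suml (bigD1 k) //= big1.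
  by rewrite -scalemxAr e_eigen dotvZl dotvZl e_orthonormal eqxx mulr1 addr0 mulrC.
move=> l /negPf lk; rewrite -scalemxAr e_eigen !dotvZl e_orthonormal lk.
by rewrite !mulr0.
Qed.

Lemma dotv_eigen_sum u v :
  dotv u (V *m v) = \sum_(k < d) lam k * dotv u (e k) * dotv v (e k).
Proof.
rewrite dotv_parseval; apply: eq_bigr => k _.
by rewrite dotv_eigen mulrCA mulrA.
Qed.

End InnerProduct.

Section Derivatives.
Context {R : realType}.

Lemma is_derive_entry {m n} {f : R -> 'M[R]_(m, n)} {t : R} {df : 'M[R]_(m, n)} i j :
  is_derive t 1 f df -> is_derive t 1 (fun s => f s i j) (df i j).
Proof.
move=> [f_derivable fd].
have : (fun h => h^-1 *: ((f \o shift t) (h *: 1) - f t)) @ 0^' --> df by rewrite -fd.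
move=> /(continuous_cvg _ (@coord_continuous R m n i j df)) entry_cvg.
have entry_cvg' : (fun h => h^-1 *: ((fun s => f s i j) (h *: 1 + t) - f t i j))
   @ 0^' --> df i j.
  by apply: cvg_trans entry_cvg; apply: near_eq_cvg; near=> h; rewrite /= !mxE.
by split; [exact: cvgP entry_cvg' | exact: cvg_lim entry_cvg'].
Unshelve. all: by end_near. Qed.

Lemma is_derive_dotvl {d} {f : R -> 'cV[R]_d} {t : R} {df : 'cV[R]_d} (w : 'cV[R]_d) :
  is_derive t 1 f df -> is_derive t 1 (fun s => dotv (f s) w) (dotv df w).
Proof.
move=> fd; under eq_fun do rewrite dotvC; rewrite dotvC /dotv.
have -> : (fun s => \sum_(j < d) w j 0 * f s j 0) =
    \sum_(j < d) (w j 0 *: fun s => f s j 0).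
  by apply/funext => s; rewrite fct_sumE.
by apply: is_derive_sum => j; exact: is_deriveZ (is_derive_entry j 0 fd).
Qed.

Lemma is_derive_affine (a b t : R) : is_derive t 1 (fun u => a * u + b) a.
Proof.
refine (is_derive_eq (is_deriveD (is_deriveZ a (is_derive_id t 1))
  (is_derive_cst b t 1)) _).
by rewrite addr0 /GRing.scale /= mulr1.
Qed.

Lemma is_derive_expRM (c t : R) :
  is_derive t 1 (fun u => expR (c * u)) (c * expR (c * t)).
Proof.
have := @is_derive1_comp _ expR _ t _ _ (is_derive_expR _) (is_derive_affine c 0 t).
have -> : (fun u => expR (c * u)) = expR \o (fun u => c * u + 0).
  by apply/funext => u; rewrite /= addr0.
by rewrite addr0 mulrC.
Qed.

Lemma cvg_expR_decay (mu : R) : 0 < mu -> expR (- (mu * t)) @[t --> +oo] --> 0.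
Proof.
move=> mu0; have mu_t : (mu * t) @[t --> +oo] --> +oo.
  apply/cvgryPge => A; apply: filterS (nbhs_pinfty_ge (num_real (A / mu))) => s.
  by rewrite ler_pdivrMr // mulrC.
exact: cvg_comp _ _ mu_t (@cvgr_expR R).
Qed.

End Derivatives.

Section AttentionWeights.
Context {R : realType} {d n : nat} (beta : R) (V : 'M[R]_d) (X : 'I_n -> 'cV[R]_d).

Definition attn_weight i j := expR (beta * dotv (X i) (V *m X j)) / Zpart beta V X i.

Lemma Zpart_gt0 i : 0 < Zpart beta V X i.
Proof.
rewrite /Zpart (bigD1 i) //=; apply: ltr_pwDl; first exact: expR_gt0.
by apply: sumr_ge0 => j _; exact: expR_ge0.
Qed.

Lemma attn_weight_gt0 i j : 0 < attn_weight i j.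
Proof. by rewrite divr_gt0 ?expR_gt0 ?Zpart_gt0. Qed.

Lemma sum_attn_weight i : \sum_j attn_weight i j = 1.
Proof. by rewrite -mulr_suml divff // gt_eqF // Zpart_gt0. Qed.

Lemma dotv_attn_field i v :
  dotv (attn_field beta V X i) v =
  \sum_j attn_weight i j * dotv (V *m X j) v
  - (\sum_j attn_weight i j * dotv (V *m X j) (X i)) * dotv (X i) v.
Proof.
have weighted_sum w : (Zpart beta V X i)^-1 *
    \sum_j dotv (expR (beta * dotv (X i) (V *m X j)) *: (V *m X j)) w =
    \sum_j attn_weight i j * dotv (V *m X j) w.
  by rewrite mulr_sumr; apply: eq_bigr => j _; rewrite dotvZl mulrA [_^-1 * _]mulrC.
rewrite /attn_field /Pperp dotvBl dotvZl [dotv (X i) _]dotvC !dotvZl !dotv_suml.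
by rewrite !weighted_sum.
Qed.

End AttentionWeights.

Section Inequalities.
Context {R : realFieldType}.

Lemma gap_first_coord_drift_ge0 d (lam u w : 'I_d.+1 -> R) :
  (forall k, k != ord0 -> `|lam k| < lam ord0) ->
  \sum_k u k ^+ 2 = 1 -> \sum_k w k ^+ 2 = 1 -> 0 < u ord0 -> u ord0 <= w ord0 ->
  0 <= lam ord0 * w ord0 - u ord0 * \sum_k lam k * u k * w k.
Proof.
move=> gap u1 w1 u0 uw.
rewrite (bigD1 ord0) //= in u1; rewrite (bigD1 ord0) //= in w1.
rewrite (bigD1 ord0) //=.
set P := \sum_(k | k != ord0) u k ^+ 2 in u1.
set Q := \sum_(k | k != ord0) w k ^+ 2 in w1.
set S := \sum_(k | k != ord0) lam k * u k * w k.
have P0 : 0 <= P by apply: sumr_ge0 => k _; exact: sqr_ge0.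
have Q0 : 0 <= Q by apply: sumr_ge0 => k _; exact: sqr_ge0.
have [lam0_ge0 | lam0_lt0] := leP 0 (lam ord0); last first.
  have no_k (k : 'I_d.+1) : k != ord0 -> false.
    by move=> /gap; have := normr_ge0 (lam k); lra.
  have P_0 : P = 0 by rewrite /P big1 // => k /no_k.
  have S_0 : S = 0 by rewrite /S big1 // => k /no_k.
  have u0_sq : u ord0 ^+ 2 = 1 by rewrite -u1 P_0 addr0.
  have -> : u ord0 * (lam ord0 * u ord0 * w ord0 + S) = lam ord0 * w ord0 * u ord0 ^+ 2.
    by rewrite S_0; ring.
  by rewrite u0_sq mulr1 subrr.
(* AM-GM weighted by the gap: [lam k * u k * w k <= lam ord0 * (u k ^+ 2 + w k ^+ 2) / 2]. *)
have amgm : S <= lam ord0 * (P + Q) / 2.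
  rewrite /S /P /Q -big_split mulr_sumr mulr_suml /=; apply: ler_sum => k /gap.
  rewrite ltr_norml => /andP[gap1 gap2].
  have : 0 <= (lam ord0 - lam k) * (u k + w k) ^+ 2.
    by apply: mulr_ge0; [lra | exact: sqr_ge0].
  have : 0 <= (lam ord0 + lam k) * (u k - w k) ^+ 2.
    by apply: mulr_ge0; [lra | exact: sqr_ge0].
  nra.
have QP : Q <= P by nra.
have : u ord0 * S <= u ord0 * (lam ord0 * (P + Q) / 2) by rewrite ler_pM2l.
have : 0 <= lam ord0 * (w ord0 * P - u ord0 * (P + Q) / 2).
  by apply: mulr_ge0 => //; nra.
have -> : P = 1 - u ord0 ^+ 2 by lra.
nra.
Qed.

Lemma touching_ratio_drift_le n (A c1 ck : 'I_n -> R) (i : 'I_n) (s B delta lamk lam1 : R) :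
  (forall j, 0 <= A j) -> \sum_j A j = 1 -> (forall j, delta <= c1 j) -> 0 < delta ->
  c1 i <= 1 -> `|s| = 1 -> 0 < B -> (forall j, `|ck j| <= B * c1 j) ->
  s * ck i = B * c1 i -> `|lamk| < lam1 ->
  s * ((lamk * c1 i * \sum_j A j * ck j - lam1 * ck i * \sum_j A j * c1 j) / c1 i ^+ 2)
    <= - (delta * (lam1 - `|lamk|)) * B.
Proof.
move=> A0 A1 c1_ge delta0 c1_le1 s1 B0 ck_le touch gap.
set M := \sum_j A j * c1 j.
set N := \sum_j A j * ck j.
have c1i_gt0 : 0 < c1 i by apply: lt_le_trans (c1_ge i).
have M_ge : delta <= M.
  by rewrite -[delta]mul1r -A1 mulr_suml; apply: ler_sum => j _; apply: ler_wpM2l.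
have N_le : `|N| <= B * M.
  apply: le_trans (ler_norm_sum _ _ _) _; rewrite /M mulr_sumr.
  by apply: ler_sum => j _; rewrite normrM ger0_norm // mulrCA; apply: ler_wpM2l.
have -> : s * ((lamk * c1 i * N - lam1 * ck i * M) / c1 i ^+ 2)
    = (lamk * (s * N) - lam1 * (s * ck i) * M / c1 i) / c1 i.
  by field; rewrite gt_eqF.
have -> : lam1 * (s * ck i) * M / c1 i = lam1 * B * M.
  by rewrite touch; field; rewrite gt_eqF.
rewrite ler_pdivrMr //.
have : lamk * (s * N) <= `|lamk| * (B * M).
  apply: le_trans (ler_norm _) _; rewrite !normrM s1 mul1r.
  by apply: ler_wpM2l.
have : delta * c1 i <= M by apply: le_trans M_ge; exact: ler_piMr (ltW delta0) c1_le1.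
have : 0 <= (lam1 - `|lamk|) * B by rewrite mulr_ge0 ?subr_ge0 ?ltW.
nra.
Qed.

End Inequalities.

Section AttentionDynamics.
Context {R : realType} {d n : nat} {beta : R} {V : 'M[R]_d.+1}
  {e : 'I_d.+1 -> 'cV[R]_d.+1} {lam : 'I_d.+1 -> R}
  {x : 'I_n -> R -> 'cV[R]_d.+1} {delta : R}.
Implicit Types (i j : 'I_n) (k : 'I_d.+1) (s t u a : R).
Hypothesis e_orthonormal : orthonormal e.
Hypothesis e_eigen : forall k, V *m e k = lam k *: e k.
Hypothesis lam_gap : forall k, k != ord0 -> `|lam k| < lam ord0.
Hypothesis x_unit : forall i (t : R), 0 <= t -> dotv (x i t) (x i t) = 1.
Hypothesis x_cont : forall i, {within `[0, +oo[, continuous (x i)}.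
Hypothesis x_deriv : forall i (t : R), 0 < t ->
  is_derive t 1 (x i) (attn_field beta V (fun j => x j t) i).
Hypothesis delta_gt0 : 0 < delta.

Let c i k t := dotv (x i t) (e k).
Let w t := attn_weight beta V (fun j => x j t).
Let energy i t := \sum_j w t i j * dotv (V *m x j t) (x i t).
Let coord_drift i k t := lam k * \sum_j w t i j * c j k t - energy i t * c i k t.

Lemma coord_derive i k t : 0 < t -> is_derive t 1 (c i k) (coord_drift i k t).
Proof.
move=> t0; apply: is_derive_eq (is_derive_dotvl (e k) (x_deriv i t t0)) _.
rewrite dotv_attn_field /coord_drift /energy /c /w; congr (_ - _).
rewrite mulr_sumr; apply: eq_bigr => j _.
by rewrite (dotv_eigen e_orthonormal e_eigen) mulrCA.
Qed.

Lemma sum_coord_sqr i t : 0 <= t -> \sum_k c i k t ^+ 2 = 1.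
Proof.
move=> t0; rewrite -(x_unit i t t0) (dotv_parseval e_orthonormal).
by apply: eq_bigr => k _; rewrite expr2.
Qed.

Lemma coord_le1 i k t : 0 <= t -> c i k t <= 1.
Proof.
move=> /(sum_coord_sqr i); rewrite (bigD1 k) //= => sum1.
have : 0 <= \sum_(l | l != k) c i l t ^+ 2 by apply: sumr_ge0 => l _; exact: sqr_ge0.
nra.
Qed.

Lemma coord_cvg_right i k a : 0 <= a -> c i k u @[u --> a^'+] --> c i k a.
Proof.
rewrite le_eqVlt => /predU1P[<- | a0].
  have [_ x_right] := (continuous_within_itvcyP 0 (x i)).1 (x_cont i).
  exact: continuous_cvg (continuous_dotvl _ _) x_right.
by apply: cvg_at_right_filter; exact: is_derive_continuous (coord_derive i k a a0).
Qed.

Lemma first_coord_drift_ge0 i t : 0 <= t -> 0 < c i ord0 t ->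
  (forall j, c i ord0 t <= c j ord0 t) -> 0 <= coord_drift i ord0 t.
Proof.
move=> t0 ci0 ci_min.
have -> : coord_drift i ord0 t = \sum_j w t i j *
    (lam ord0 * c j ord0 t - c i ord0 t * \sum_k lam k * c i k t * c j k t).
  rewrite /coord_drift /energy mulr_sumr mulr_suml -sumrB; apply: eq_bigr => j _.
  rewrite dotvC (dotv_eigen_sum e_orthonormal e_eigen); ring.
apply: sumr_ge0 => j _; apply: mulr_ge0; first exact/ltW/attn_weight_gt0.
exact: gap_first_coord_drift_ge0 lam_gap (sum_coord_sqr i t t0) (sum_coord_sqr j t t0)
  ci0 (ci_min j).
Qed.

Lemma cone_forward_invariant s t : 0 <= s -> s <= t ->
  (forall i, delta <= c i ord0 s) -> forall i, delta <= c i ord0 t.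
Proof.
move=> s0 st cone_s i; apply/ler_addgt0Pr => eta eta0.
pose eta' := Num.min eta (delta / 2).
have eta'_gt0 : 0 < eta' by rewrite lt_min eta0 divr_gt0.
have eta'_le : eta' <= eta /\ eta' <= delta / 2 by split; rewrite ge_min lexx ?orbT.
pose kap := eta' / (1 + (t - s)).
have kap_gt0 : 0 < kap by rewrite divr_gt0 //; lra.
(* a barrier falling linearly from [delta - kap] at [s] to [delta - eta'] at [t] *)
pose b u := - kap * u + (delta - kap * (1 - s)).
have kap_t : kap * (1 + (t - s)) = eta' by rewrite /kap divfK // gt_eqF //; lra.
have b_ge u : u <= t -> delta - eta' <= b u.
  move=> ut; have : kap * (1 + (u - s)) <= kap * (1 + (t - s)).
    by apply: ler_wpM2l; [exact: ltW | lra].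
  rewrite /b; lra.
suff : 0 < c i ord0 t - b t by have := b_ge t (lexx t); lra.
apply: (@barrier_positive _ _ (fun j u => c j ord0 u - b u)
    (fun j u => coord_drift j ord0 u + kap) s t) => //.
- move=> j; apply: cvgB; first exact: coord_cvg_right.
  exact/cvg_at_right_filter/(is_derive_continuous (is_derive_affine _ _ s)).
- move=> j u su ut; have u0 : 0 < u by exact: le_lt_trans su.
  apply: is_derive_eq (is_deriveB (coord_derive j ord0 u u0) (is_derive_affine _ _ u)) _.
  by rewrite opprK.
- by move=> j; have := cone_s j; rewrite /b; lra.
- move=> j u su ut all_ge cj_eq; have u0 : 0 <= u by apply: ltW; exact: le_lt_trans su.
  have cj_pos : 0 < c j ord0 u by have := b_ge u ut; lra.
  have : 0 <= coord_drift j ord0 u.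
    by apply: first_coord_drift_ge0 => // l; have := all_ge l; lra.
  lra.
Qed.

Hypothesis x_cone0 : forall i, delta <= c i ord0 0.

Lemma first_coord_ge i t : 0 <= t -> delta <= c i ord0 t.
Proof. by move=> t0; exact: cone_forward_invariant (lexx 0) t0 x_cone0 i. Qed.

Lemma first_coord_gt0 i t : 0 <= t -> 0 < c i ord0 t.
Proof. by move=> /(first_coord_ge i); exact: lt_le_trans. Qed.

Let ratio k i t := c i k t / c i ord0 t.
Let ratio_drift k i t := (lam k * c i ord0 t * \sum_j w t i j * c j k t
  - lam ord0 * c i k t * \sum_j w t i j * c j ord0 t) / c i ord0 t ^+ 2.
Let decay k := delta * (lam ord0 - `|lam k|).

Lemma ratio_derive k i t : 0 < t -> is_derive t 1 (ratio k i) (ratio_drift k i t).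
Proof.
move=> t0; have ci0 : c i ord0 t != 0 by rewrite gt_eqF // first_coord_gt0 // ltW.
refine (is_derive_eq (is_deriveM (coord_derive i k t t0)
  (is_deriveV ci0 (coord_derive i ord0 t t0))) _).
by rewrite /ratio_drift /coord_drift /GRing.scale /=; field.
Qed.

Lemma ratio_drift_touching k i t (b : bool) (M : R) : k != ord0 -> 0 <= t -> 0 < M ->
  (forall j, `|ratio k j t| <= M) -> (-1) ^+ b * ratio k i t = M ->
  (-1) ^+ b * ratio_drift k i t <= - decay k * M.
Proof.
move=> k0 t0 M0 ratio_le touch.
apply: (@touching_ratio_drift_le _ n (w t i) (fun j => c j ord0 t) (fun j => c j k t)).
- by move=> j; exact/ltW/attn_weight_gt0.
- exact: sum_attn_weight.
- by move=> j; exact: first_coord_ge.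
- exact: delta_gt0.
- exact: coord_le1.
- exact: normr_sign.
- exact: M0.
- move=> j; have := ratio_le j; have cj0 := first_coord_gt0 j t t0.
  by rewrite /ratio normrM normfV (gtr0_norm cj0) ler_pdivrMr // mulrC.
- by rewrite -touch -mulrA divfK // gt_eqF // first_coord_gt0.
- exact: lam_gap.
Qed.

Lemma ratio_decay k i t : k != ord0 -> 0 <= t ->
  `|ratio k i t| <= \big[Num.max/0]_j `|ratio k j 0| * expR (- (decay k * t)).
Proof.
move=> k0 t0; set R0 := \big[Num.max/0]_j _.
have R0_ge0 : 0 <= R0 by exact: bigmax_ge_id.
have decay_gt0 : 0 < decay k by rewrite mulr_gt0 // subr_gt0 lam_gap.
apply/ler_addgt0Pr => eps eps0.
pose B u := R0 * expR (- decay k * u) + eps.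
pose B' u := R0 * (- decay k * expR (- decay k * u)).
have B_derive u : is_derive u 1 B (B' u).
  refine (is_derive_eq (is_deriveD (is_deriveZ R0 (is_derive_expRM _ u))
    (is_derive_cst eps u 1)) _).
  by rewrite addr0.
have B_gt0 u : 0 < B u by rewrite /B ltr_pwDr // mulr_ge0 // expR_ge0.
suff pos (b : bool) : 0 < B t - (-1) ^+ b * ratio k i t.
  have := pos false; have := pos true; rewrite expr0 expr1 mulN1r mul1r /B mulNr.
  by move=> h1 h2; rewrite ler_norml; apply/andP; split; lra.
(* One barrier for each of [B - r_j] and [B + r_j], indexed by [(j, b)]. *)
apply: (@barrier_positive _ ('I_n * bool)%type
  (fun jb u => B u - (-1) ^+ jb.2 * ratio k jb.1 u)
  (fun jb u => B' u - (-1) ^+ jb.2 * ratio_drift k jb.1 u) 0 t _ _ _ _ (i, b) t t0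
  (lexx t)).
- move=> [j b'] /=; apply: cvgB.
    exact/cvg_at_right_filter/(is_derive_continuous (B_derive 0)).
  apply: cvgMr; apply: cvgM; first exact: coord_cvg_right.
  by apply: cvgV; [rewrite gt_eqF // first_coord_gt0 | exact: coord_cvg_right].
- move=> [j b'] u u0 _ /=.
  exact: is_deriveB (B_derive u) (is_deriveZ _ (ratio_derive k j u u0)).
- move=> [j b'] /=; rewrite /B mulr0 expR0 mulr1.
  have : (-1) ^+ b' * ratio k j 0 <= R0.
    apply: le_trans (ler_norm _) _; rewrite normrM normr_sign mul1r.
    exact: (le_bigmax 0 (fun j => `|ratio k j 0|) j).
  lra.
- move=> [j b'] u u0 _ /= all_ge touch.
  have ratio_le l : `|ratio k l u| <= B u.
    have := all_ge (l, false); have := all_ge (l, true).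
    rewrite /= expr0 expr1 mulN1r mul1r => h1 h2.
    by rewrite ler_norml; apply/andP; split; lra.
  have := ratio_drift_touching k j u b' (B u) k0 (ltW u0) (B_gt0 u) ratio_le ltac:(lra).
  have := mulr_gt0 decay_gt0 eps0.
  rewrite /B' /B; lra.
Qed.

Lemma ratio_cvg0 k i : k != ord0 -> ratio k i t @[t --> +oo] --> 0.
Proof.
move=> k0; set R0 := \big[Num.max/0]_j `|ratio k j 0|.
have decay_cvg : R0 * expR (- (decay k * t)) @[t --> +oo] --> 0.
  rewrite -(mulr0 R0); apply: cvgMr; apply: cvg_expR_decay.
  by rewrite mulr_gt0 // subr_gt0 lam_gap.
have decay_cvgN : - (R0 * expR (- (decay k * t))) @[t --> +oo] --> 0.
  by rewrite -oppr0; exact: cvgN.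
apply: (squeeze_cvgr _ decay_cvgN decay_cvg).
apply: filterS (nbhs_pinfty_ge (num_real 0)) => t t0.
by rewrite -ler_norml; exact: ratio_decay.
Qed.

Lemma first_coord_cvg1 i : c i ord0 t @[t --> +oo] --> (1 : R).
Proof.
have ratio_sqr_cvg k : k != ord0 -> ratio k i t ^+ 2 @[t --> +oo] --> (0 : R).
  by move=> k0; rewrite -(mulr0 (0 : R)); apply: cvgM; exact: ratio_cvg0.
have tail_cvg : 1 - \sum_(k | k != ord0) ratio k i t ^+ 2 @[t --> +oo] --> (1 : R).
  apply: cvg_trans (cvgB (cvg_cst (1 : R)) (cvg_sum ratio_sqr_cvg)) _.
  by rewrite big1 // subr0.
(* [1 - c <= 1 - c ^+ 2 <= (1 - c ^+ 2) / c ^+ 2 = sum of the squared ratios] *)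
apply: (squeeze_cvgr _ tail_cvg (cvg_cst (1 : R))).
apply: filterS (nbhs_pinfty_ge (num_real 0)) => t t0.
rewrite coord_le1 // andbT.
have ci0 := first_coord_gt0 i t t0; have ci1 := coord_le1 i ord0 t t0.
have : \sum_(k | k != ord0) ratio k i t ^+ 2 = (1 - c i ord0 t ^+ 2) / c i ord0 t ^+ 2.
  have : \sum_(k | k != ord0) c i k t ^+ 2 = 1 - c i ord0 t ^+ 2.
    by have := sum_coord_sqr i t t0; rewrite (bigD1 ord0) //=; lra.
  move=> <-.
  by rewrite mulr_suml; apply: eq_bigr => k _; rewrite expr_div_n.
move=> ->; have : 1 - c i ord0 t <= (1 - c i ord0 t ^+ 2) / c i ord0 t ^+ 2.
  have : c i ord0 t ^+ 2 <= c i ord0 t by rewrite expr2; exact: ler_piMr (ltW ci0) ci1.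
  have : 0 <= (1 - c i ord0 t) * (1 - c i ord0 t ^+ 2).
    by apply: mulr_ge0; nra.
  by rewrite ler_pdivlMr ?exprn_gt0 //; nra.
lra.
Qed.

Lemma coord_cvg0 i k : k != ord0 -> c i k t @[t --> +oo] --> (0 : R).
Proof.
move=> k0; suff : c i k t @[t --> +oo] --> (0 * 1 : R) by rewrite mul0r.
apply: cvg_trans (cvgM (ratio_cvg0 k i k0) (first_coord_cvg1 i)).
apply: near_eq_cvg; apply: filterS (nbhs_pinfty_ge (num_real 0)) => t t0.
by rewrite /= /ratio divfK // gt_eqF // first_coord_gt0.
Qed.

Lemma particle_cvg i : x i t @[t --> +oo] --> e ord0.
Proof.
rewrite {1}(orthonormal_expansion e_orthonormal (e ord0)).
have -> : x i = fun t => \sum_k c i k t *: e k.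
  by apply/funext => t; exact: orthonormal_expansion.
apply: cvg_sum => k _; rewrite e_orthonormal; apply: cvgZl.
by have [-> | k0] := eqVneq k ord0; [exact: first_coord_cvg1 | exact: coord_cvg0].
Qed.

End AttentionDynamics.

Theorem theorem6p1 (R : realType) (d n : nat) (beta : R)
  (V : 'M[R]_d.+1) (e : 'I_d.+1 -> 'cV[R]_d.+1) (lam : 'I_d.+1 -> R)
  (x : 'I_n -> R -> 'cV[R]_d.+1) (delta : R) :
  0 < beta ->
  V^T = V ->
  (forall k l, dotv (e k) (e l) = (k == l)%:R) ->
  (forall k, V *m e k = lam k *: e k) ->
  (forall k, k != ord0 -> `|lam k| < lam ord0) ->
  (forall i (t : R), 0 <= t -> dotv (x i t) (x i t) = 1) ->
  (forall i, {within `[0, +oo[, continuous (x i)}) ->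
  (forall i (t : R), 0 < t ->
     is_derive t 1 (x i) (attn_field beta V (fun j => x j t) i)) ->
  0 < delta ->
  (forall i, delta <= dotv (x i 0) (e ord0)) ->
  (* (1) forward invariance of the cone C_delta *)
  (forall s t : R, 0 <= s -> s <= t ->
     (forall i, delta <= dotv (x i s) (e ord0)) ->
     (forall i, delta <= dotv (x i t) (e ord0)))
  /\
  (* (2) exponential decay of R_k *)
  (forall k, k != ord0 -> forall t : R, 0 <= t ->
     \big[Num.max/0]_(i < n) `|dotv (x i t) (e k) / dotv (x i t) (e ord0)|
     <= \big[Num.max/0]_(i < n) `|dotv (x i 0) (e k) / dotv (x i 0) (e ord0)|
        * expR (- (delta * (lam ord0 - `|lam k|) * t)))
  /\
  (* (3) convergence to e_1 *)
  (forall i, x i t @[t --> +oo%R] --> e ord0).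
Proof.
move=> _ _ e_on e_eig gap x_unit x_cont x_der delta0 cone0.
split; first exact: cone_forward_invariant e_on e_eig gap x_unit x_cont x_der delta0.
split; last exact: particle_cvg e_on e_eig gap x_unit x_cont x_der delta0 cone0.
move=> k k0 t t0; apply: bigmax_le => [|i _].
  by rewrite mulr_ge0 ?expR_ge0 //; exact: bigmax_ge_id.
exact: ratio_decay e_on e_eig gap x_unit x_cont x_der delta0 cone0 k i t k0 t0.
Qed.
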